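(* Let $P_1,P_2\in\mathbf{C}^{n\times n}$. The following three statements are equivalent: (1) $\{P_1,P_2\}>0$ (resp. $\geq 0$); (2) $\{P_1,P_2\}_\circ>0$ (resp. $\geq 0$); (3) $\{P_1,P_2\}_\diamond>0$ (resp. $\geq0$). Moreover, a real matrix $P\in\mathbf{R}^{2n\times 2n}$ is positive definite (resp. positive semidefinite) if and only if there exists a unique bimatrix $\{P_1,P_2\}>0$ (resp. $\geq 0$) such that $\{P_1,P_2\}_\circ=P$.
   Context: $P^{\#}$, $P^{\mathrm T}$, $P^{\mathrm H}$ denote entrywise conjugate, transpose, conjugate transpose. For $A_1,A_2\in\mathbf{C}^{n\times m}$ the bimatrix $\{A_1,A_2\}$ is the real-linear map $x\mapsto A_1x+A_2^{\#}x^{\#}$ (equality = equality as maps, equivalently of the pairs). Its conjugate transpose is $\{A_1,A_2\}^{\mathrm H}=\{A_1^{\mathrm H},A_2^{\mathrm T}\}$. A square bimatrix $\{P_1,P_2\}$ is Hermite if $\{P_1,P_2\}=\{P_1,P_2\}^{\mathrm H}$, i.e. $P_1=P_1^{\mathrm H}$ and $P_2=P_2^{\mathrm T}$. It is positive definite (resp. semidefinite), written $\{P_1,P_2\}>0$ (resp. $\geq0$), if it is Hermite and $\mathrm{Re}\big(x^{\mathrm H}(P_1x+P_2^{\#}x^{\#})\big)>0$ (resp. $\geq 0$) for all nonzero $x\in\mathbf{C}^n$. Complex lifting: $\{P_1,P_2\}_\diamond=\begin{bmatrix}P_1 & P_2^{\#}\\ P_2 & P_1^{\#}\end{bmatrix}$.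 Real representation: $\{P_1,P_2\}_\circ=\begin{bmatrix}\mathrm{Re}(P_1+P_2) & -\mathrm{Im}(P_1+P_2)\\ \mathrm{Im}(P_1-P_2) & \mathrm{Re}(P_1-P_2)\end{bmatrix}$. For an ordinary (real or complex) square matrix, $>0$ (resp. $\geq0$) means Hermitian (symmetric if real) positive definite (resp. semidefinite). *)

From HB Require Import structures.
From mathcomp Require Import all_boot all_order all_algebra.
From mathcomp Require Import complex.
Set Implicit Arguments. Unset Strict Implicit. Unset Printing Implicit Defensive.
Import Order.TTheory GRing.Theory Num.Theory.
Local Open Scope ring_scope.

Section BiMatrix.
Variable R : rcfType.
Local Notation C := (R[i]).

Definition mxconj m n (A : 'M[C]_(m, n)) : 'M[C]_(m, n) := map_mx (@conjc R) A.
Definition mxH m n (A : 'M[C]_(m, n)) : 'M[C]_(n, m) := (mxconj A)^T.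

Definition biapply m n (A1 A2 : 'M[C]_(m, n)) (x : 'cV[C]_n) : 'cV[C]_m :=
  A1 *m x + mxconj A2 *m mxconj x.

(* Hermite bimatrix {P1,P2} = {P1,P2}^H, i.e. P1 = P1^H and P2 = P2^T *)
Definition bi_hermite n (P1 P2 : 'M[C]_n) : Prop := P1 = mxH P1 /\ P2 = P2^T.

Definition bi_posdef n (P1 P2 : 'M[C]_n) : Prop :=
  bi_hermite P1 P2 /\
  forall x : 'cV[C]_n, x != 0 -> 0 < complex.Re ((mxH x *m biapply P1 P2 x) 0 0).

Definition bi_possemidef n (P1 P2 : 'M[C]_n) : Prop :=
  bi_hermite P1 P2 /\
  forall x : 'cV[C]_n, 0 <= complex.Re ((mxH x *m biapply P1 P2 x) 0 0).

(* complex lifting {P1,P2}_diamond *)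
Definition bi_lift n (P1 P2 : 'M[C]_n) : 'M[C]_(n + n) :=
  block_mx P1 (mxconj P2) P2 (mxconj P1).

Definition mxRe m n (A : 'M[C]_(m, n)) : 'M[R]_(m, n) := map_mx (@complex.Re R) A.
Definition mxIm m n (A : 'M[C]_(m, n)) : 'M[R]_(m, n) := map_mx (@complex.Im R) A.

(* real representation {P1,P2}_circ *)
Definition bi_real n (P1 P2 : 'M[C]_n) : 'M[R]_(n + n) :=
  block_mx (mxRe (P1 + P2)) (- mxIm (P1 + P2)) (mxIm (P1 - P2)) (mxRe (P1 - P2)).

Definition cmx_posdef m (A : 'M[C]_m) : Prop :=
  A = mxH A /\ forall x : 'cV[C]_m, x != 0 -> 0 < (mxH x *m A *m x) 0 0.
Definition cmx_possemidef m (A : 'M[C]_m) : Prop :=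
  A = mxH A /\ forall x : 'cV[C]_m, 0 <= (mxH x *m A *m x) 0 0.

Definition rmx_posdef m (A : 'M[R]_m) : Prop :=
  A = A^T /\ forall x : 'cV[R]_m, x != 0 -> 0 < (x^T *m A *m x) 0 0.
Definition rmx_possemidef m (A : 'M[R]_m) : Prop :=
  A = A^T /\ forall x : 'cV[R]_m, 0 <= (x^T *m A *m x) 0 0.

End BiMatrix.

From HB Require Import structures.
From mathcomp Require Import all_boot all_order all_algebra.
From mathcomp Require Import complex ring lra.
Import Order.TTheory GRing.Theory Num.Theory.
Local Open Scope ring_scope.
Set Implicit Arguments. Unset Strict Implicit. Unset Printing Implicit Defensive.

(* Writing x = a + i b, the real part of x^H (P1 x + P2^# x^#) is the
   quadratic form of {P1,P2}_circ at (a, b), and x |-> (a, b) is a bijection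
   C^n -> R^2n; this gives (1) <-> (2).  The Hermitian form of
   {P1,P2}_diamond at (x, y) is half the sum of the bimatrix form at x + y^#
   and at i (y^# - x), two vectors that vanish together only if (x, y) = 0;
   at y = x^# it is twice the bimatrix form at x.  This gives (1) <-> (3).
   Finally {P1,P2} |-> {P1,P2}_circ is a bijection with an explicit inverse,
   so a positive real P has exactly one positive preimage. *)

Lemma bilinear_formE (T : pzSemiRingType) m (u v : 'cV[T]_m) (M : 'M[T]_m) :
  (u^T *m M *m v) 0 0 = \sum_i \sum_j u i 0 * M i j * v j 0.
Proof.
rewrite mxE; under eq_bigr => j _ do rewrite mxE mulr_suml.
rewrite exchange_big; apply: eq_bigr => i _; apply: eq_bigr => j _.
by rewrite !mxE.
Qed.

Lemma big_split_ord2 (V : nmodType) m (F : 'I_(m + m) -> 'I_(m + m) -> V) :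
  \sum_i \sum_j F i j = \sum_i \sum_j (F (lshift m i) (lshift m j)
    + F (lshift m i) (rshift m j) + F (rshift m i) (lshift m j)
    + F (rshift m i) (rshift m j)).
Proof.
rewrite big_split_ord /=; under eq_bigr do rewrite big_split_ord.
under [X in _ + X]eq_bigr do rewrite big_split_ord.
rewrite !big_split /=; under [RHS]eq_bigr do rewrite !big_split /=.
by rewrite !big_split /= !addrA.
Qed.

Lemma double_sum_sym (V : nmodType) m (F : 'I_m -> 'I_m -> V) :
  (\sum_i \sum_j F i j) *+ 2 = \sum_i \sum_j (F i j + F j i).
Proof.
rewrite mulr2n {2}exchange_big -big_split; apply: eq_bigr => i _.
by rewrite -big_split.
Qed.

Section BiMatrixForms.
Variable R : rcfType.
Local Open Scope complex_scope.
Local Notation C := R[i].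
Local Notation Re := (@complex.Re R).
Local Notation Im := (@complex.Im R).

Definition rform m (M : 'M[R]_m) (w : 'cV[R]_m) : R := (w^T *m M *m w) 0 0.
Definition cform m (A : 'M[C]_m) (z : 'cV[C]_m) : C := (mxH z *m A *m z) 0 0.
Definition biform n (P1 P2 : 'M[C]_n) (x : 'cV[C]_n) : R :=
  Re ((mxH x *m biapply P1 P2 x) 0 0).

Definition realvec n (x : 'cV[C]_n) : 'cV[R]_(n + n) := col_mx (mxRe x) (mxIm x).
Definition cplxvec n (w : 'cV[R]_(n + n)) : 'cV[C]_n :=
  \col_i (usubmx w i 0 +i* dsubmx w i 0).

Lemma realvecK n : cancel (@realvec n) (@cplxvec n).
Proof.
move=> x; apply/matrixP => i j; rewrite /realvec (ord1 j) mxE col_mxKu col_mxKd !mxE.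
by case: (x i 0).
Qed.

Lemma cplxvecK n : cancel (@cplxvec n) (@realvec n).
Proof.
move=> w; rewrite /realvec -[RHS]vsubmxK.
by congr col_mx; apply/matrixP => i j; rewrite !mxE (ord1 j).
Qed.

Lemma realvecD n (x y : 'cV[C]_n) : realvec (x + y) = realvec x + realvec y.
Proof. by rewrite /realvec /mxRe /mxIm !map_mxD add_col_mx. Qed.

Lemma realvec0 n : realvec 0 = 0 :> 'cV[R]_(n + n).
Proof. by rewrite /realvec /mxRe /mxIm !map_mx0 col_mx0. Qed.

Lemma realvec_eq0 n (x : 'cV[C]_n) : (realvec x == 0) = (x == 0).
Proof. by rewrite -(realvec0 n) (can_eq (@realvecK n)). Qed.

Lemma mxconjK m n : involutive (@mxconj R m n).
Proof. by move=> A; apply/matrixP => i j; rewrite !mxE conjcK. Qed.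

Lemma rformZ m (M : 'M[R]_m) a w : rform M (a *: w) = a ^+ 2 * rform M w.
Proof. by rewrite /rform -scalemxAr [(a *: w)^T]linearZ -!scalemxAl !mxE mulrA. Qed.

Lemma rform0 m (M : 'M[R]_m) : rform M 0 = 0.
Proof. by rewrite /rform mulmx0 mxE. Qed.

Lemma biformE n (P1 P2 : 'M[C]_n) x : biform P1 P2 x =
  \sum_i \sum_j Re ((x i 0)^* * (P1 i j * x j 0 + (P2 i j)^* * (x j 0)^*)).
Proof.
rewrite /biform /biapply /mxH mulmxDr !mulmxA mxE !bilinear_formE -big_split raddf_sum.
apply: eq_bigr => i _; rewrite -big_split raddf_sum; apply: eq_bigr => j _.
by rewrite /mxconj !mxE mulrDr !mulrA.
Qed.

Lemma biform_real n (P1 P2 : 'M[C]_n) x :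
  biform P1 P2 x = rform (bi_real P1 P2) (realvec x).
Proof.
rewrite biformE /rform bilinear_formE big_split_ord2.
apply: eq_bigr => i _; apply: eq_bigr => j _.
rewrite /bi_real /realvec !col_mxEu !col_mxEd !row_mxEl !row_mxEr /mxRe /mxIm !mxE.
case: (x i 0) (x j 0) (P1 i j) (P2 i j) => [a b] [c d] [e f] [g h] /=; ring.
Qed.

Lemma bi_hermiteE n (P1 P2 : 'M[C]_n) : bi_hermite P1 P2 <->
  (forall i j, P1 i j = (P1 j i)^*) /\ (forall i j, P2 i j = P2 j i).
Proof.
split=> [[/matrixP h1 /matrixP h2] | [h1 h2]].
  by split=> i j; [rewrite {1}h1 !mxE | rewrite {1}h2 !mxE].
by split; apply/matrixP => i j; rewrite !mxE.
Qed.

Lemma bi_hermite_real n (P1 P2 : 'M[C]_n) :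
  bi_hermite P1 P2 <-> bi_real P1 P2 = (bi_real P1 P2)^T.
Proof.
rewrite bi_hermiteE /bi_real tr_block_mx /mxRe /mxIm; split=> [[h1 h2] | ].
  by congr block_mx; apply/matrixP => i j; rewrite !mxE (h1 i j) (h2 i j);
    case: (P1 j i) (P2 j i) => [a b] [c d] /=; ring.
case/eq_block_mx => /matrixP E1 /matrixP E2 _ /matrixP E4.
split=> i j; move: (E1 i j) (E2 i j) (E2 j i) (E4 i j); rewrite !mxE;
  case: (P1 i j) (P1 j i) (P2 i j) (P2 j i) => [a b] [c d] [e f] [g h] /= *;
  congr (_ +i* _); lra.
Qed.

Lemma bi_hermite_lift n (P1 P2 : 'M[C]_n) :
  bi_hermite P1 P2 <-> bi_lift P1 P2 = mxH (bi_lift P1 P2).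
Proof.
rewrite bi_hermiteE /bi_lift /mxH /mxconj map_block_mx tr_block_mx.
split=> [[h1 h2] | /eq_block_mx[/matrixP E1 /matrixP E2 _ _]].
  by congr block_mx; apply/matrixP => i j; rewrite !mxE ?(h1 i j) ?(h2 i j) ?conjcK.
split=> i j; first by move: (E1 i j); rewrite !mxE.
by move: (E2 i j); rewrite !mxE => /(congr1 conjc); rewrite !conjcK.
Qed.

Lemma cform_lift n (P1 P2 : 'M[C]_n) (x y : 'cV[C]_n) : bi_hermite P1 P2 ->
  cform (bi_lift P1 P2) (col_mx x y) =
  ((biform P1 P2 (x + mxconj y) + biform P1 P2 ('i *: (mxconj y - x))) / 2%:R)%:C.
Proof.
move=> /bi_hermiteE[h1 h2].
have two_neq0 : (2%:R : C) != 0 by rewrite pnatr_eq0.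
rewrite rmorphM fmorphV rmorph_nat; apply: (canRL (mulfK two_neq0)); rewrite mulr_natr.
rewrite /cform /mxH bilinear_formE big_split_ord2 double_sum_sym.
rewrite !biform_real /rform !bilinear_formE !big_split_ord2 -big_split rmorph_sum.
apply: eq_bigr => i _; rewrite -big_split rmorph_sum; apply: eq_bigr => j _.
rewrite /bi_lift /bi_real /realvec /mxconj /mxRe /mxIm.
rewrite !(col_mxEu, col_mxEd, row_mxEl, row_mxEr, mxE) (h1 j i) (h2 j i).
case: (x i 0) (x j 0) (y i 0) (y j 0) (P1 i j) (P2 i j)
  => [a1 b1] [a2 b2] [a3 b3] [a4 b4] [a5 b5] [a6 b6] /=.
by simpc; congr (_ +i* _); ring.
Qed.

Lemma biform0 n (P1 P2 : 'M[C]_n) : biform P1 P2 0 = 0.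
Proof. by rewrite biform_real realvec0 rform0. Qed.

Lemma cform_lift_conj n (P1 P2 : 'M[C]_n) (x : 'cV[C]_n) : bi_hermite P1 P2 ->
  cform (bi_lift P1 P2) (col_mx x (mxconj x)) = (biform P1 P2 x *+ 2)%:C.
Proof.
move=> herm; rewrite cform_lift // mxconjK subrr scaler0 biform0 addr0.
rewrite !biform_real realvecD -mulr2n -scaler_nat rformZ.
congr _%:C; lra.
Qed.

Lemma lift_parts_neq0 n (x y : 'cV[C]_n) : col_mx x y != 0 ->
  (x + mxconj y != 0) || ('i *: (mxconj y - x) != 0).
Proof.
apply: contraNT; rewrite negb_or !negbK scaler_eq0 subr_eq0 => /andP[sum0].
have i_neq0 : 'i != 0 :> C by rewrite eq_complex /= oner_eq0 andbF.
rewrite (negbTE i_neq0) /= => /eqP yx; move: sum0; rewrite yx.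
rewrite -mulr2n -scaler_nat scaler_eq0 pnatr_eq0 /= => /eqP x0.
by rewrite -col_mx0 -[y]mxconjK yx x0 /mxconj map_mx0.
Qed.

Lemma biform_ge0_real n (P1 P2 : 'M[C]_n) :
  (forall x, 0 <= biform P1 P2 x) <-> (forall w, 0 <= rform (bi_real P1 P2) w).
Proof.
split=> psd v; last by rewrite biform_real.
by rewrite -[v]cplxvecK -biform_real.
Qed.

Lemma biform_gt0_real n (P1 P2 : 'M[C]_n) :
  (forall x, x != 0 -> 0 < biform P1 P2 x) <->
  (forall w, w != 0 -> 0 < rform (bi_real P1 P2) w).
Proof.
split=> pd v v0; last by rewrite biform_real pd ?realvec_eq0.
by rewrite -[v]cplxvecK -biform_real pd // -realvec_eq0 cplxvecK.
Qed.

Lemma bi_posdef_real n (P1 P2 : 'M[C]_n) :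
  bi_posdef P1 P2 <-> rmx_posdef (bi_real P1 P2).
Proof. by split=> -[/bi_hermite_real herm /biform_gt0_real pd]. Qed.

Lemma bi_possemidef_real n (P1 P2 : 'M[C]_n) :
  bi_possemidef P1 P2 <-> rmx_possemidef (bi_real P1 P2).
Proof. by split=> -[/bi_hermite_real herm /biform_ge0_real psd]. Qed.

Lemma bi_posdef_lift n (P1 P2 : 'M[C]_n) :
  bi_posdef P1 P2 <-> cmx_posdef (bi_lift P1 P2).
Proof.
split=> [[herm pd] | [/bi_hermite_lift herm pd]]; split=> //.
- exact/bi_hermite_lift.
- have psd x : 0 <= biform P1 P2 x.
    by have [->|/pd/ltW //] := eqVneq x 0; rewrite biform0.
  move=> z; rewrite -[z]vsubmxK => z0; rewrite -/(cform _ _) cform_lift // ltcR.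
  have := psd (usubmx z + mxconj (dsubmx z)).
  have := psd ('i *: (mxconj (dsubmx z) - usubmx z)).
  by case/orP: (lift_parts_neq0 z0) => /pd; lra.
- move=> x x0; have /pd : col_mx x (mxconj x) != 0.
    by apply: contra x0; rewrite -col_mx0 => /eqP/eq_col_mx[-> _].
  by rewrite -/(cform _ _) cform_lift_conj // ltcR pmulrn_lgt0.
Qed.

Lemma bi_possemidef_lift n (P1 P2 : 'M[C]_n) :
  bi_possemidef P1 P2 <-> cmx_possemidef (bi_lift P1 P2).
Proof.
split=> [[herm psd] | [/bi_hermite_lift herm psd]]; split=> //.
- exact/bi_hermite_lift.
- move=> z; rewrite -[z]vsubmxK -/(cform _ _) cform_lift // lecR.
  by rewrite divr_ge0 ?addr_ge0 ?psd.
- move=> x; have := psd (col_mx x (mxconj x)).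
  by rewrite -/(cform _ _) cform_lift_conj // lecR pmulrn_lge0.
Qed.

(* Solves Re (P1 + P2) = A, -Im (P1 + P2) = B, Im (P1 - P2) = D,
   Re (P1 - P2) = E for the blocks [A B; D E] of P. *)
Definition bi_of_real n (P : 'M[R]_(n + n)) : 'M[C]_n * 'M[C]_n :=
  (\matrix_(i, j) (((ulsubmx P i j + drsubmx P i j) / 2%:R)
                    +i* ((dlsubmx P i j - ursubmx P i j) / 2%:R)),
   \matrix_(i, j) (((ulsubmx P i j - drsubmx P i j) / 2%:R)
                    -i* ((ursubmx P i j + dlsubmx P i j) / 2%:R))).

Lemma bi_of_realK n (P : 'M[R]_(n + n)) :
  bi_real (bi_of_real P).1 (bi_of_real P).2 = P.
Proof.
rewrite -[RHS]submxK /bi_real; congr block_mx; apply/matrixP => i j;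
  rewrite /mxRe /mxIm !mxE /=; lra.
Qed.

Lemma bi_realK n (P1 P2 : 'M[C]_n) : bi_of_real (bi_real P1 P2) = (P1, P2).
Proof.
rewrite /bi_of_real /bi_real block_mxKul block_mxKur block_mxKdl block_mxKdr.
congr pair; apply/matrixP => i j; rewrite /mxRe /mxIm !mxE;
  case: (P1 i j) (P2 i j) => [a b] [c d] /=; congr (_ +i* _); lra.
Qed.

Lemma exists_unique_bi_real n
    (bipos : 'M[C]_n -> 'M[C]_n -> Prop) (rpos : 'M[R]_(n + n) -> Prop) :
  (forall P1 P2, bipos P1 P2 <-> rpos (bi_real P1 P2)) ->
  forall P, rpos P <->
    exists! Q : 'M[C]_n * 'M[C]_n, bipos Q.1 Q.2 /\ bi_real Q.1 Q.2 = P.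
Proof.
move=> posE P; split=> [rposP | [[Q1 Q2] [[/posE + <-] _]] //].
exists (bi_of_real P); split.
  by split; [apply/posE; rewrite bi_of_realK | exact: bi_of_realK].
by move=> [Q1 Q2] [_ <-]; rewrite bi_realK.
Qed.

End BiMatrixForms.

Theorem lemma7 (R : rcfType) (n : nat) :
  (forall P1 P2 : 'M[R[i]]_n,
     (bi_posdef P1 P2 <-> rmx_posdef (bi_real P1 P2)) /\
     (bi_posdef P1 P2 <-> cmx_posdef (bi_lift P1 P2)) /\
     (bi_possemidef P1 P2 <-> rmx_possemidef (bi_real P1 P2)) /\
     (bi_possemidef P1 P2 <-> cmx_possemidef (bi_lift P1 P2))) /\
  (forall P : 'M[R]_(n + n),
     (rmx_posdef P <->
        exists! Q : 'M[R[i]]_n * 'M[R[i]]_n,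
          bi_posdef Q.1 Q.2 /\ bi_real Q.1 Q.2 = P) /\
     (rmx_possemidef P <->
        exists! Q : 'M[R[i]]_n * 'M[R[i]]_n,
          bi_possemidef Q.1 Q.2 /\ bi_real Q.1 Q.2 = P)).
Proof.
split=> [P1 P2 | P].
  exact: (conj (bi_posdef_real P1 P2) (conj (bi_posdef_lift P1 P2)
           (conj (bi_possemidef_real P1 P2) (bi_possemidef_lift P1 P2)))).
split; apply: exists_unique_bi_real.
  exact: bi_posdef_real.
exact: bi_possemidef_real.
Qed.
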